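(* Let $\phi:\mathcal M_1\to\mathcal M_2$ be a homomorphism of local Moufang sets, $\mathcal M_1=(X,(U_x))$, $\mathcal M_2=(Y,(V_y))$. (i) For each $x\in X$ there is a unique map $\theta_x:U_x\to V_{x\phi}$ with $(zu)\phi=(z\phi)\theta_x(u)$ for all $z\in X$, $u\in U_x$, and $\theta_x$ is a group homomorphism. (ii) If $x\in X$, $u\in U_x$, $v\in V_{x\phi}$ and there is $x'\in X\setminus\overline x$ with $(x'u)\phi=(x'\phi)v$, then $v=\theta_x(u)$. Suppose moreover that bases $(0,\infty)$ of $X$ and $(0',\infty')$ of $Y$ are chosen with $0\phi=0'$, $\infty\phi=\infty'$. Then (iii) for $x\not\sim\infty$, $\theta_\infty(\alpha_x)=\alpha_{x\phi}$ and $(-x)\phi=-(x\phi)$; (iv) if $x$ is a unit then $x\phi$ is a unit, $\mu_x\phi=\phi\mu_{x\phi}$, and if $\mu_x=g\alpha_xh$ with $g,h\in U_0$ then $\mu_{x\phi}=\theta_0(g)\alpha_{x\phi}\theta_0(h)$; (v) if $x$ is a unit then $\tilde x\phi=\widetilde{x\phi}$, where $\tilde y:=-((-y)\mu_y)$; (vi) $H_1\phi\subseteq\phi H_2$, where $H_1,H_2$ are the Hua subgroups of $\mathcal M_1,\mathcal M_2$.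
   Context: Group actions are right actions; maps are composed left to right, so $u\phi$ means first $u$ then $\phi$. For $(X,\sim)$, $\overline x$ is the class of $x$, $\overline X$ the set of classes, $\mathrm{Sym}(X,\sim)$ the bijections $g$ with $x\sim y\iff xg\sim yg$, $\overline U$ the induced group on $\overline X$. A local Moufang set is $(X,\sim)$ with $|\overline X|>2$ and subgroups $U_x\le\mathrm{Sym}(X,\sim)$ ($x\in X$) with: (LM0) $x\sim y\Rightarrow\overline{U_x}=\overline{U_y}$; (LM1) $U_x$ fixes $x$ and is sharply transitive on $X\setminus\overline x$; (LM1') $\overline{U_x}$ fixes $\overline x$ and is sharply transitive on $\overline X\setminus\{\overline x\}$; (LM2) $U_x^g=U_{xg}$ for all $x$ and all $g\in G:=\langle U_y\rangle$, where $g^h=h^{-1}gh$. A homomorphism $\mathcal M_1=(X,(U_x))\to\mathcal M_2=(Y,(V_y))$ is a map $\phi:X\to Y$ such that $x\sim x'\iff x\phi\sim x'\phi$ for all $x,x'\in X$, and $U_x\phi\subseteq\phi V_{x\phi}$ for all $x$ (i.e. for every $u\in U_x$ there is $v\in V_{x\phi}$ with $u\phi=\phi v$). Given a basis $(0,\infty)$ (two inequivalent points): $\alpha_x$ ($x\not\sim\infty$) is the unique element of $U_\infty$ with $0\alpha_x=x$; $-x:=0\alpha_x^{-1}$; a unit is $x$ with $x\not\sim0,\infty$; $\mu_x$ is the unique element of $U_0\alpha_xU_0$ swapping $0,\infty$; the Hua subgroup is $H=\langle\mu_x\mu_y\mid x,y\text{ units}\rangle$. *)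

From Stdlib Require Import Classical ClassicalEpsilon FunctionalExtensionality.

Set Implicit Arguments.

(* Right actions, maps composed left to right:  z (f g) = g (f z). *)
Definition comp {X : Type} (f g : X -> X) : X -> X := fun z => g (f z).

Definition inv_pair {X : Type} (f g : X -> X) : Prop :=
  (forall z, g (f z) = z) /\ (forall z, f (g z) = z).

Definition sym_perm {X : Type} (sim : X -> X -> Prop) (f : X -> X) : Prop :=
  (exists g, inv_pair f g) /\ (forall x y, sim x y <-> sim (f x) (f y)).

Definition is_subgroup {X : Type} (sim : X -> X -> Prop) (P : (X -> X) -> Prop) : Prop :=
  (forall f, P f -> sym_perm sim f) /\
  P (fun z => z) /\
  (forall f g, P f -> P g -> P (comp f g)) /\
  (forall f, P f -> exists g, P g /\ inv_pair f g).

Inductive gen_group {X : Type} (S : (X -> X) -> Prop) : (X -> X) -> Prop :=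
  | gg_id : gen_group S (fun z => z)
  | gg_mul : forall g s, gen_group S g -> S s -> gen_group S (comp g s)
  | gg_inv : forall g s w, gen_group S g -> S s -> inv_pair s w ->
               gen_group S (comp g w).

(* (X,~) with root groups (U_x), U x u  meaning  u \in U_x *)
Definition local_moufang_set {X : Type} (sim : X -> X -> Prop)
    (U : X -> (X -> X) -> Prop) : Prop :=
  (forall x, sim x x) /\ (forall x y, sim x y -> sim y x) /\
  (forall x y z, sim x y -> sim y z -> sim x z) /\
  (exists a b c, ~ sim a b /\ ~ sim a c /\ ~ sim b c) /\
  (forall x, is_subgroup sim (U x)) /\
  (* LM0: x ~ y  =>  induced groups on X/~ coincide *)
  (forall x y, sim x y -> forall u, U x u ->
       exists u', U y u' /\ forall z, sim (u z) (u' z)) /\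
  (forall x u, U x u -> u x = x) /\
  (forall x y z, ~ sim y x -> ~ sim z x -> exists! u, U x u /\ u y = z) /\
  (* LM1': induced group fixes the class of x and is sharply transitive
     on the other classes *)
  (forall x u, U x u -> sim (u x) x) /\
  (forall x y z, ~ sim y x -> ~ sim z x -> exists u, U x u /\ sim (u y) z) /\
  (forall x u u' y, U x u -> U x u' -> ~ sim y x -> sim (u y) (u' y) ->
       forall w, sim (u w) (u' w)) /\
  (* LM2: U_x^g = U_{xg} for g in G = <U_y> ; w = g^-1 u g  iff
     u = g w g^-1 *)
  (forall x g ginv, gen_group (fun s => exists y, U y s) g -> inv_pair g ginv ->
       forall w, U (g x) w <-> U x (fun z => ginv (w (g z)))).

Definition lms_hom {X Y : Type} (simX : X -> X -> Prop) (U : X -> (X -> X) -> Prop)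
    (simY : Y -> Y -> Prop) (V : Y -> (Y -> Y) -> Prop) (phi : X -> Y) : Prop :=
  (forall x x', simX x x' <-> simY (phi x) (phi x')) /\
  (forall x u, U x u -> exists v, V (phi x) v /\ forall z, phi (u z) = v (phi z)).

(* theta : U_x -> V_{x phi} with (z u) phi = (z phi) theta(u)
   (theta is a total function on X -> X; only its values on U_x matter) *)
Definition theta_spec {X Y : Type} (U : X -> (X -> X) -> Prop)
    (V : Y -> (Y -> Y) -> Prop) (phi : X -> Y) (x : X)
    (theta : (X -> X) -> (Y -> Y)) : Prop :=
  forall u, U x u -> V (phi x) (theta u) /\ forall z, phi (u z) = theta u (phi z).

Definition alpha {X : Type} (U : X -> (X -> X) -> Prop) (zero inf x : X) : X -> X :=
  epsilon (inhabits (fun z : X => z)) (fun a => U inf a /\ a zero = x).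

Definition lms_neg {X : Type} (U : X -> (X -> X) -> Prop) (zero inf x : X) : X :=
  epsilon (inhabits zero) (fun y => alpha U zero inf x y = zero).

Definition is_unit {X : Type} (sim : X -> X -> Prop) (zero inf x : X) : Prop :=
  ~ sim x zero /\ ~ sim x inf.

Definition mu {X : Type} (U : X -> (X -> X) -> Prop) (zero inf x : X) : X -> X :=
  epsilon (inhabits (fun z : X => z))
    (fun m => (exists g h, U zero g /\ U zero h /\
                 m = comp (comp g (alpha U zero inf x)) h) /\
              m zero = inf /\ m inf = zero).

Definition tilde {X : Type} (U : X -> (X -> X) -> Prop) (zero inf x : X) : X :=
  lms_neg U zero inf (mu U zero inf x (lms_neg U zero inf x)).

Definition hua {X : Type} (sim : X -> X -> Prop) (U : X -> (X -> X) -> Prop)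
    (zero inf : X) : (X -> X) -> Prop :=
  gen_group (fun s => exists x y, is_unit sim zero inf x /\ is_unit sim zero inf y /\
                        s = comp (mu U zero inf x) (mu U zero inf y)).

From Stdlib Require Import Classical ClassicalEpsilon.

(* Every map in sight is determined by its value at a single point off the
   relevant class: an element of [V_(x phi)] by its value at [x' phi] (sharp
   transitivity), and [mu_x] by the [U_0]-factors, which are fixed by where
   [0] and [infinity] go.  So each identity of the theorem is proved by
   checking that both sides are of the right shape and agree at one point,
   the [phi]-image side being computed through [phi (z u) = (z phi) theta(u)]. *)

Lemma inv_pair_comp {T : Type} (f f' g g' : T -> T) :
  inv_pair f f' -> inv_pair g g' -> inv_pair (comp f g) (comp g' f').
Proof.
  intros [Hf Hf'] [Hg Hg']; unfold comp; split; intro z.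
  - rewrite Hg; apply Hf.
  - rewrite Hf'; apply Hg'.
Qed.

Lemma gen_group_transport {X Y : Type} (phi : X -> Y)
    (S1 : (X -> X) -> Prop) (S2 : (Y -> Y) -> Prop) :
  (forall s, S1 s -> exists s' w', S2 s' /\ inv_pair s' w' /\
     forall z, phi (s z) = s' (phi z)) ->
  forall g, gen_group S1 g ->
  exists g', gen_group S2 g' /\ forall z, phi (g z) = g' (phi z).
Proof.
  intros Hgen g Hg.
  induction Hg as [|g s _ [g' [Hg' Eg]] Hs|g s w _ [g' [Hg' Eg]] Hs [_ Hsw]].
  - exists (fun z => z); split; [constructor | reflexivity].
  - destruct (Hgen s Hs) as (s' & w' & Hs' & _ & Es).
    exists (comp g' s'); split; [now apply gg_mul |].
    intro z; unfold comp; now rewrite Es, Eg.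
  - destruct (Hgen s Hs) as (s' & w' & Hs' & Hinv' & Es).
    exists (comp g' w'); split; [now apply gg_inv with s' |].
    destruct Hinv' as [Hsw' _].
    intro z; unfold comp.
    (* [phi (z g s^-1) = phi (z g s^-1) s' s'^-1 = phi (z g s^-1 s) s'^-1 = phi (z g) s'^-1] *)
    now rewrite <- Eg, <- (Hsw' (phi (w (g z)))), <- Es, Hsw.
Qed.

Section LocalMoufangSet.

Context {T : Type} {sim : T -> T -> Prop} {U : T -> (T -> T) -> Prop}.
Hypothesis HM : local_moufang_set sim U.

Lemma sim_sym x y : sim x y -> sim y x.
Proof. destruct HM as (_ & H & _); exact (H x y). Qed.

Lemma sim_trans x y z : sim x y -> sim y z -> sim x z.
Proof. destruct HM as (_ & _ & H & _); exact (H x y z). Qed.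

Lemma exists_not_sim x : exists z, ~ sim z x.
Proof.
  destruct HM as (_ & _ & _ & (a & b & _ & Hab & _) & _).
  destruct (classic (sim a x)) as [Hax | Hax]; [| now exists a].
  exists b; intro Hbx; apply Hab, (sim_trans _ x); [exact Hax | now apply sim_sym].
Qed.

Lemma root_group x : is_subgroup sim (U x).
Proof. destruct HM as (_ & _ & _ & _ & H & _); exact (H x). Qed.

Lemma root_fix x u : U x u -> u x = x.
Proof. destruct HM as (_ & _ & _ & _ & _ & _ & H & _); exact (H x u). Qed.

Lemma root_sharp x y z : ~ sim y x -> ~ sim z x -> exists! u, U x u /\ u y = z.
Proof. destruct HM as (_ & _ & _ & _ & _ & _ & _ & H & _); exact (H x y z). Qed.

Lemma root_sym_perm x u : U x u -> sym_perm sim u.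
Proof. intro Hu; now apply (proj1 (root_group x)). Qed.

Lemma root_invertible x u : U x u -> exists w, inv_pair u w.
Proof. intro Hu; exact (proj1 (root_sym_perm x u Hu)). Qed.

Lemma root_injective x u a b : U x u -> u a = u b -> a = b.
Proof.
  intros Hu E; destruct (root_invertible x u Hu) as [w [Hw _]].
  now rewrite <- (Hw a), <- (Hw b), E.
Qed.

Lemma root_sim x u a b : U x u -> (sim a b <-> sim (u a) (u b)).
Proof. intro Hu; exact (proj2 (root_sym_perm x u Hu) a b). Qed.

Lemma root_comp x u u' : U x u -> U x u' -> U x (comp u u').
Proof. destruct (root_group x) as (_ & _ & H & _); exact (H u u'). Qed.

Lemma root_transitive x a b : ~ sim a x -> ~ sim b x -> exists u, U x u /\ u a = b.
Proof.
  intros Ha Hb; destruct (root_sharp x a b Ha Hb) as [u [Hu _]]; now exists u.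
Qed.

Lemma root_eq_at x u u' z : U x u -> U x u' -> ~ sim z x -> u z = u' z -> u = u'.
Proof.
  intros Hu Hu' Hz E.
  assert (Huz : ~ sim (u z) x).
  { intro C; apply Hz, (root_sim x u z x Hu); now rewrite (root_fix x u Hu). }
  destruct (root_sharp x z (u z) Hz Huz) as [w [_ Hw]].
  transitivity w; [symmetry |]; apply Hw; auto.
Qed.

Section Basis.

Context {zero inf : T}.
Hypothesis Hbasis : ~ sim zero inf.

Lemma alpha_spec x : ~ sim x inf ->
  U inf (alpha U zero inf x) /\ alpha U zero inf x zero = x.
Proof.
  intro Hx; apply (epsilon_spec (inhabits (fun z => z)) (fun a => U inf a /\ a zero = x)).
  now apply root_transitive.
Qed.

Lemma alpha_neg x : ~ sim x inf -> alpha U zero inf x (lms_neg U zero inf x) = zero.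
Proof.
  intro Hx; destruct (root_invertible _ _ (proj1 (alpha_spec x Hx))) as [w [_ Hw]].
  apply (epsilon_spec (inhabits zero) (fun y => alpha U zero inf x y = zero)).
  exists (w zero); apply Hw.
Qed.

Lemma neg_not_sim_zero x : is_unit sim zero inf x -> ~ sim (lms_neg U zero inf x) zero.
Proof.
  intros [Hx0 Hxinf] Hneg; destruct (alpha_spec x Hxinf) as [Ha Ha0].
  pose proof (proj1 (root_sim inf _ _ _ Ha) Hneg) as Himage.
  rewrite (alpha_neg x Hxinf), Ha0 in Himage; now apply Hx0, sim_sym.
Qed.

Definition is_mu (x : T) (m : T -> T) : Prop :=
  (exists g h, U zero g /\ U zero h /\ m = comp (comp g (alpha U zero inf x)) h) /\
  m zero = inf /\ m inf = zero.

(* [mu_x = g alpha_x h] with [g : infinity |-> -x] and [h : x |-> infinity] *)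
Lemma mu_exists x : is_unit sim zero inf x -> exists m, is_mu x m.
Proof.
  intros [Hx0 Hxinf].
  assert (Hinf0 : ~ sim inf zero) by (intro C; now apply Hbasis, sim_sym).
  destruct (alpha_spec x Hxinf) as [_ Ha0].
  destruct (root_transitive zero x inf Hx0 Hinf0) as [h [Hh Hhx]].
  destruct (root_transitive zero inf (lms_neg U zero inf x)
              Hinf0 (neg_not_sim_zero x (conj Hx0 Hxinf))) as [g [Hg Hgneg]].
  exists (comp (comp g (alpha U zero inf x)) h); repeat split.
  - exists g, h; auto.
  - unfold comp; now rewrite (root_fix zero g Hg), Ha0.
  - unfold comp; now rewrite Hgneg, (alpha_neg x Hxinf), (root_fix zero h Hh).
Qed.

Lemma mu_spec x : is_unit sim zero inf x -> is_mu x (mu U zero inf x).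
Proof.
  intro Hx; apply (epsilon_spec (inhabits (fun z => z)) (is_mu x)).
  now apply mu_exists.
Qed.

Lemma mu_unique x m m' : is_unit sim zero inf x -> is_mu x m -> is_mu x m' -> m = m'.
Proof.
  intros [Hx0 Hxinf] [(g & h & Hg & Hh & ->) [E0 Einf]]
    [(g' & h' & Hg' & Hh' & ->) [E0' Einf']].
  assert (Hinf0 : ~ sim inf zero) by (intro C; now apply Hbasis, sim_sym).
  destruct (alpha_spec x Hxinf) as [Ha Ha0].
  unfold comp in *.
  rewrite (root_fix zero g Hg), Ha0 in E0.
  rewrite (root_fix zero g' Hg'), Ha0 in E0'.
  assert (Eh : h = h') by (apply (root_eq_at zero h h' x); auto; congruence).
  subst h'.
  assert (Eg : g = g').
  { apply (root_eq_at zero g g' inf); auto.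
    apply (root_injective inf _ _ _ Ha), (root_injective zero h _ _ Hh); congruence. }
  now subst g'.
Qed.

Lemma mu_sim x a b : is_unit sim zero inf x ->
  (sim a b <-> sim (mu U zero inf x a) (mu U zero inf x b)).
Proof.
  intro Hx; destruct (mu_spec x Hx) as [(g & h & Hg & Hh & ->) _]; unfold comp.
  rewrite (root_sim zero g a b Hg),
          (root_sim inf _ _ _ (proj1 (alpha_spec x (proj2 Hx)))).
  exact (root_sim zero h _ _ Hh).
Qed.

Lemma mu_invertible x : is_unit sim zero inf x -> exists w, inv_pair (mu U zero inf x) w.
Proof.
  intro Hx; destruct (mu_spec x Hx) as [(g & h & Hg & Hh & ->) _].
  destruct (root_invertible zero g Hg) as [g' Eg].
  destruct (root_invertible zero h Hh) as [h' Eh].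
  destruct (root_invertible inf _ (proj1 (alpha_spec x (proj2 Hx)))) as [a' Ea].
  eexists; apply inv_pair_comp; [apply inv_pair_comp |]; eassumption.
Qed.

End Basis.

End LocalMoufangSet.

Section Homomorphism.

Context {X Y : Type} {simX : X -> X -> Prop} {U : X -> (X -> X) -> Prop}
  {simY : Y -> Y -> Prop} {V : Y -> (Y -> Y) -> Prop} {phi : X -> Y}.
Hypothesis HX : local_moufang_set simX U.
Hypothesis HY : local_moufang_set simY V.
Hypothesis Hphi : lms_hom simX U simY V phi.

Lemma hom_not_sim a b : ~ simX a b -> ~ simY (phi a) (phi b).
Proof. intros Hab C; now apply Hab, (proj1 Hphi). Qed.

Lemma hom_unit zero inf x :
  is_unit simX zero inf x -> is_unit simY (phi zero) (phi inf) (phi x).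
Proof. intros [Hx0 Hxinf]; split; now apply hom_not_sim. Qed.

Lemma theta_exists x : exists theta, theta_spec U V phi x theta.
Proof.
  set (P u v := V (phi x) v /\ forall z, phi (u z) = v (phi z)).
  exists (fun u => epsilon (inhabits (fun z => z)) (P u)).
  intros u Hu; apply (epsilon_spec _ (P u)); exact (proj2 Hphi x u Hu).
Qed.

Lemma theta_eq_of_agree x u v x' :
  U x u -> V (phi x) v -> ~ simX x' x -> phi (u x') = v (phi x') ->
  forall theta, theta_spec U V phi x theta -> v = theta u.
Proof.
  intros Hu Hv Hx' E theta Htheta; destruct (Htheta u Hu) as [Hthu Ethu].
  apply (root_eq_at HY (phi x) v (theta u) (phi x')); auto.
  - now apply hom_not_sim.
  - now rewrite <- E, Ethu.
Qed.

Lemma theta_unique x theta theta' u :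
  theta_spec U V phi x theta -> theta_spec U V phi x theta' -> U x u ->
  theta' u = theta u.
Proof.
  intros Htheta Htheta' Hu; destruct (exists_not_sim HX x) as [x' Hx'].
  destruct (Htheta' u Hu) as [Hv E].
  exact (theta_eq_of_agree x u _ x' Hu Hv Hx' (E x') theta Htheta).
Qed.

Lemma theta_comp x theta u u' :
  theta_spec U V phi x theta -> U x u -> U x u' ->
  theta (comp u u') = comp (theta u) (theta u').
Proof.
  intros Htheta Hu Hu'; destruct (exists_not_sim HX x) as [x' Hx'].
  destruct (Htheta u Hu) as [Hv E]; destruct (Htheta u' Hu') as [Hv' E'].
  symmetry; apply (theta_eq_of_agree x _ _ x'); auto.
  - now apply (root_comp HX).
  - now apply (root_comp HY).
  - unfold comp; now rewrite E', E.
Qed.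

Section Basis.

Context {zero inf : X}.
Hypothesis Hbasis : ~ simX zero inf.

Lemma theta_alpha x theta : ~ simX x inf -> theta_spec U V phi inf theta ->
  theta (alpha U zero inf x) = alpha V (phi zero) (phi inf) (phi x).
Proof.
  intros Hx Htheta; destruct (alpha_spec HX Hbasis x Hx) as [Ha Ha0].
  destruct (alpha_spec HY (hom_not_sim _ _ Hbasis) (phi x) (hom_not_sim _ _ Hx))
    as [Ha' Ha0'].
  symmetry; apply (theta_eq_of_agree inf _ _ zero); auto.
  now rewrite Ha0, Ha0'.
Qed.

Lemma hom_alpha x z : ~ simX x inf ->
  phi (alpha U zero inf x z) = alpha V (phi zero) (phi inf) (phi x) (phi z).
Proof.
  intro Hx; destruct (theta_exists inf) as [theta Htheta].
  rewrite <- (theta_alpha x theta Hx Htheta).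
  exact (proj2 (Htheta _ (proj1 (alpha_spec HX Hbasis x Hx))) z).
Qed.

Lemma hom_neg x : ~ simX x inf ->
  phi (lms_neg U zero inf x) = lms_neg V (phi zero) (phi inf) (phi x).
Proof.
  intro Hx.
  pose proof (hom_not_sim _ _ Hbasis) as Hbasis'.
  pose proof (hom_not_sim _ _ Hx) as Hx'.
  apply (root_injective HY _ _ _ _ (proj1 (alpha_spec HY Hbasis' (phi x) Hx'))).
  rewrite <- (hom_alpha x _ Hx), (alpha_neg HX Hbasis x Hx).
  now rewrite (alpha_neg HY Hbasis' (phi x) Hx').
Qed.

Lemma hom_decomp x g h theta :
  ~ simX x inf -> theta_spec U V phi zero theta -> U zero g -> U zero h ->
  forall z, phi (comp (comp g (alpha U zero inf x)) h z) =
    comp (comp (theta g) (alpha V (phi zero) (phi inf) (phi x))) (theta h) (phi z).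
Proof.
  intros Hx Htheta Hg Hh z; unfold comp.
  now rewrite (proj2 (Htheta h Hh)), (hom_alpha x _ Hx), (proj2 (Htheta g Hg)).
Qed.

Lemma mu_hom_decomp x g h theta :
  is_unit simX zero inf x -> theta_spec U V phi zero theta -> U zero g -> U zero h ->
  mu U zero inf x = comp (comp g (alpha U zero inf x)) h ->
  mu V (phi zero) (phi inf) (phi x) =
    comp (comp (theta g) (alpha V (phi zero) (phi inf) (phi x))) (theta h).
Proof.
  intros Hx Htheta Hg Hh Emu.
  pose proof (hom_not_sim _ _ Hbasis) as Hbasis'.
  pose proof (hom_decomp x g h theta (proj2 Hx) Htheta Hg Hh) as Edecomp.
  destruct (mu_spec HX Hbasis x Hx) as [_ [E0 Einf]]; rewrite Emu in E0, Einf.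
  pose proof (hom_unit _ _ _ Hx) as Hx'.
  apply (mu_unique HY Hbasis' (phi x)); [exact Hx' | exact (mu_spec HY Hbasis' _ Hx') |].
  repeat split.
  - exists (theta g), (theta h); repeat split; (apply Htheta; assumption) || reflexivity.
  - now rewrite <- Edecomp, E0.
  - now rewrite <- Edecomp, Einf.
Qed.

Lemma hom_mu x z : is_unit simX zero inf x ->
  phi (mu U zero inf x z) = mu V (phi zero) (phi inf) (phi x) (phi z).
Proof.
  intro Hx; destruct (mu_spec HX Hbasis x Hx) as [(g & h & Hg & Hh & Emu) _].
  destruct (theta_exists zero) as [theta Htheta].
  rewrite (mu_hom_decomp x g h theta Hx Htheta Hg Hh Emu), Emu.
  exact (hom_decomp x g h theta (proj2 Hx) Htheta Hg Hh z).
Qed.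

Lemma hom_tilde x : is_unit simX zero inf x ->
  phi (tilde U zero inf x) = tilde V (phi zero) (phi inf) (phi x).
Proof.
  intro Hx; unfold tilde.
  assert (Hmu : ~ simX (mu U zero inf x (lms_neg U zero inf x)) inf).
  { destruct (mu_spec HX Hbasis x Hx) as [_ [E0 _]]; intro C.
    apply (neg_not_sim_zero HX Hbasis x Hx), (mu_sim HX Hbasis x _ _ Hx).
    now rewrite E0. }
  now rewrite (hom_neg _ Hmu), (hom_mu _ _ Hx), (hom_neg x (proj2 Hx)).
Qed.

Lemma hom_hua h : hua simX U zero inf h ->
  exists h', hua simY V (phi zero) (phi inf) h' /\ forall z, phi (h z) = h' (phi z).
Proof.
  apply gen_group_transport; intros s (x & y & Hx & Hy & ->).
  pose proof (hom_not_sim _ _ Hbasis) as Hbasis'.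
  destruct (mu_invertible HY Hbasis' (phi x) (hom_unit _ _ _ Hx)) as [wx Ex].
  destruct (mu_invertible HY Hbasis' (phi y) (hom_unit _ _ _ Hy)) as [wy Ey].
  exists (comp (mu V (phi zero) (phi inf) (phi x)) (mu V (phi zero) (phi inf) (phi y))),
    (comp wy wx).
  split; [| split].
  - exists (phi x), (phi y); split; [| split]; (now apply hom_unit) || reflexivity.
  - now apply inv_pair_comp.
  - intro z; unfold comp; now rewrite (hom_mu y _ Hy), (hom_mu x _ Hx).
Qed.

End Basis.

End Homomorphism.

Theorem mainTheorem8 (X Y : Type) (simX : X -> X -> Prop) (U : X -> (X -> X) -> Prop)
    (simY : Y -> Y -> Prop) (V : Y -> (Y -> Y) -> Prop) (phi : X -> Y)
    (HX : local_moufang_set simX U) (HY : local_moufang_set simY V)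
    (Hphi : lms_hom simX U simY V phi) :
  (* (i) *)
  (forall x, exists theta, theta_spec U V phi x theta /\
     (forall theta', theta_spec U V phi x theta' -> forall u, U x u -> theta' u = theta u) /\
     (forall u u', U x u -> U x u' -> theta (comp u u') = comp (theta u) (theta u'))) /\
  (* (ii) *)
  (forall x u v x', U x u -> V (phi x) v -> ~ simX x' x ->
     phi (u x') = v (phi x') ->
     forall theta, theta_spec U V phi x theta -> v = theta u) /\
  (* (iii)-(vi), for bases (0,inf) of X and (0',inf') of Y with 0 phi = 0', inf phi = inf' *)
  (forall zero inf zero' inf',
     ~ simX zero inf -> ~ simY zero' inf' -> phi zero = zero' -> phi inf = inf' ->
     (* (iii) *)
     (forall x, ~ simX x inf ->
        (forall theta, theta_spec U V phi inf theta ->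
           theta (alpha U zero inf x) = alpha V zero' inf' (phi x)) /\
        phi (lms_neg U zero inf x) = lms_neg V zero' inf' (phi x)) /\
     (* (iv) *)
     (forall x, is_unit simX zero inf x ->
        is_unit simY zero' inf' (phi x) /\
        (forall z, phi (mu U zero inf x z) = mu V zero' inf' (phi x) (phi z)) /\
        (forall g h theta, theta_spec U V phi zero theta -> U zero g -> U zero h ->
           mu U zero inf x = comp (comp g (alpha U zero inf x)) h ->
           mu V zero' inf' (phi x) =
             comp (comp (theta g) (alpha V zero' inf' (phi x))) (theta h))) /\
     (* (v) *)
     (forall x, is_unit simX zero inf x ->
        phi (tilde U zero inf x) = tilde V zero' inf' (phi x)) /\
     (* (vi) *)
     (forall h, hua simX U zero inf h ->
        exists h', hua simY V zero' inf' h' /\ forall z, phi (h z) = h' (phi z))).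
Proof.
  split; [| split].
  - intro x; destruct (theta_exists Hphi x) as [theta Htheta].
    exists theta; split; [exact Htheta | split].
    + intros theta' Htheta' u Hu.
      exact (theta_unique HX HY Hphi x theta theta' u Htheta Htheta' Hu).
    + intros u u' Hu Hu'.
      exact (theta_comp HX HY Hphi x theta u u' Htheta Hu Hu').
  - exact (theta_eq_of_agree HY Hphi).
  - intros zero inf zero' inf' Hbasis _ <- <-.
    split; [| split; [| split]].
    + intros x Hx; split.
      * intro theta; exact (theta_alpha HX HY Hphi Hbasis x theta Hx).
      * exact (hom_neg HX HY Hphi Hbasis x Hx).
    + intros x Hx; split; [| split].
      * exact (hom_unit Hphi zero inf x Hx).
      * intro z; exact (hom_mu HX HY Hphi Hbasis x z Hx).
      * intros g h theta Htheta Hg Hh.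
        exact (mu_hom_decomp HX HY Hphi Hbasis x g h theta Hx Htheta Hg Hh).
    + exact (hom_tilde HX HY Hphi Hbasis).
    + exact (hom_hua HX HY Hphi Hbasis).
Qed.
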